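(* Let $\mathcal M=\{A,B,C,D\}$ be a minimal non-passive discrete-time model. Then for every Hermitian $X>0$ there exists $\xi^*(X)>0$ such that $\widetilde W(X,\mathcal M_{-\xi^*(X)})\ge0$. Moreover, for every $\xi>\xi^*(X)$ the model $\mathcal M_{-\xi}$ is passive (indeed $\widetilde W(X,\mathcal M_{-\xi})\ge0$).
   Context: A discrete-time model is $\mathcal M=\{A,B,C,D\}$ with $A\in\mathbb C^{n\times n}$, $B\in\mathbb C^{n\times m}$, $C\in\mathbb C^{m\times n}$, $D\in\mathbb C^{m\times m}$; minimal means $(A,B)$ controllable and $(A,C)$ observable. For a model $\mathcal N=\{A',B',C',D'\}$ and Hermitian $X$, $$\widetilde W(X,\mathcal N)=\begin{bmatrix} X & XA' & XB'\\ A'^{\mathsf H}X & X & C'^{\mathsf H}\\ B'^{\mathsf H}X & C' & D'^{\mathsf H}+D'\end{bmatrix},\qquad W(X,\mathcal N)=\begin{bmatrix} X-A'^{\mathsf H}XA' & C'^{\mathsf H}-A'^{\mathsf H}XB'\\ C'-B'^{\mathsf H}XA' & D'^{\mathsf H}+D'-B'^{\mathsf H}XB'\end{bmatrix};$$ $\mathcal N$ is called passive if there is a Hermitian $X>0$ with $W(X,\mathcal N)\ge0$ (equivalently $\widetilde W(X,\mathcal N)\ge0$). For $\xi>-1$, $\mathcal M_{-\xi}=\{\tfrac{A}{1+\xi},\tfrac{B}{1+\xi},\tfrac{C}{1+\xi},\tfrac{D+\xi I_m}{1+\xi}\}$. *)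

From HB Require Import structures.
From mathcomp Require Import all_boot all_order all_algebra.
From mathcomp Require Import complex.
From mathcomp Require Import reals.
Set Implicit Arguments. Unset Strict Implicit. Unset Printing Implicit Defensive.
Import Order.TTheory GRing.Theory Num.Theory.
Local Open Scope ring_scope.

Section Defs.
Variable R : realType.
Local Notation C := (complex R).

Definition ctr (p q : nat) (M : 'M[C]_(p, q)) : 'M[C]_(q, p) :=
  (map_mx Num.conj M)^T.

Definition hermitian (p : nat) (M : 'M[C]_p) : Prop := ctr M = M.

Definition psd (p : nat) (M : 'M[C]_p) : Prop :=
  hermitian M /\ forall v : 'cV[C]_p, 0 <= (ctr v *m M *m v) 0 0.

Definition pd (p : nat) (M : 'M[C]_p) : Prop :=
  hermitian M /\ forall v : 'cV[C]_p, v != 0 -> 0 < (ctr v *m M *m v) 0 0.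

Record model (n m : nat) := Model {
  mA : 'M[C]_n; mB : 'M[C]_(n, m); mC : 'M[C]_(m, n); mD : 'M[C]_m }.

Definition controllable (n m : nat) (A : 'M[C]_n) (B : 'M[C]_(n, m)) : bool :=
  \rank (\mxrow_(k < n) (A ^+ k *m B)) == n.
Definition observable (n m : nat) (A : 'M[C]_n) (Cm : 'M[C]_(m, n)) : bool :=
  \rank (\mxcol_(k < n) (Cm *m A ^+ k)) == n.

Definition minimal (n m : nat) (M : model n m) : Prop :=
  controllable (mA M) (mB M) /\ observable (mA M) (mC M).

Definition Wt (n m : nat) (X : 'M[C]_n) (N : model n m) : 'M[C]_(n + (n + m)) :=
  block_mx X (row_mx (X *m mA N) (X *m mB N))
           (col_mx (ctr (mA N) *m X) (ctr (mB N) *m X))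
           (block_mx X (ctr (mC N)) (mC N) (ctr (mD N) + mD N)).

Definition W (n m : nat) (X : 'M[C]_n) (N : model n m) : 'M[C]_(n + m) :=
  block_mx (X - ctr (mA N) *m X *m mA N) (ctr (mC N) - ctr (mA N) *m X *m mB N)
           (mC N - ctr (mB N) *m X *m mA N)
           (ctr (mD N) + mD N - ctr (mB N) *m X *m mB N).

Definition passive (n m : nat) (N : model n m) : Prop :=
  exists X : 'M[C]_n, pd X /\ psd (W X N).

(* M_{-xi} for real xi > -1 *)
Definition shift (n m : nat) (M : model n m) (xi : R) : model n m :=
  let s := (1 + real_complex R xi)^-1 in
  Model (s *: mA M) (s *: mB M) (s *: mC M) (s *: (mD M + (real_complex R xi)%:M)).
End Defs.

(* Proof: (1 + xi) Wt(X, M_{-xi}) = Wt(X, M) + xi diag(X, X, 2I). The quadratic form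
   of the positive definite diag(X, X, 2I) dominates c |v|^2 for some c > 0 (spectral
   theorem), while that of the Hermitian Wt(X, M) is at least -K |v|^2. Hence
   Wt(X, M_{-xi}) >= 0 as soon as xi >= K / c, and then M_{-xi} is passive with the
   same X, because W(X, N) is a compression of Wt(X, N). *)

From Pilot Require Import Defs.
From HB Require Import structures.
From mathcomp Require Import all_boot all_order all_algebra.
From mathcomp Require Import complex.
From mathcomp Require Import reals.
From mathcomp Require Import sesquilinear spectral.
Import Order.TTheory GRing.Theory Num.Theory.
Set Implicit Arguments. Unset Strict Implicit. Unset Printing Implicit Defensive.
Local Open Scope ring_scope.

Section ConjugateTranspose.
Variable R : realType.
Local Notation C := (complex R).

Lemma ctr_trC p q (M : 'M[C]_(p, q)) : ctr M = (M ^t* )%sesqui.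
Proof. by rewrite /ctr map_trmx. Qed.

Lemma ctrK p q (A : 'M[C]_(p, q)) : ctr (ctr A) = A.
Proof. by apply/matrixP => i j; rewrite !mxE conjCK. Qed.

Lemma ctr_mul p q r (A : 'M[C]_(p, q)) (B : 'M[C]_(q, r)) :
  ctr (A *m B) = ctr B *m ctr A.
Proof. by rewrite /ctr map_mxM trmx_mul. Qed.

Lemma ctrD p q (A B : 'M[C]_(p, q)) : ctr (A + B) = ctr A + ctr B.
Proof. by rewrite /ctr map_mxD linearD. Qed.

Lemma ctrN p q (A : 'M[C]_(p, q)) : ctr (- A) = - ctr A.
Proof. by rewrite /ctr map_mxN linearN. Qed.

Lemma ctrB p q (A B : 'M[C]_(p, q)) : ctr (A - B) = ctr A - ctr B.
Proof. by rewrite ctrD ctrN. Qed.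

Lemma ctrZ p q (a : C) (A : 'M[C]_(p, q)) : ctr (a *: A) = a^* *: ctr A.
Proof. by apply/matrixP => i j; rewrite !mxE rmorphM. Qed.

Lemma ctr0 p q : ctr (0 : 'M[C]_(p, q)) = 0.
Proof. by rewrite /ctr map_mx0 trmx0. Qed.

Lemma ctr_scalar p (a : C) : ctr (a%:M : 'M[C]_p) = a^*%:M.
Proof. by rewrite /ctr map_scalar_mx tr_scalar_mx. Qed.

Lemma ctr_row p q1 q2 (A : 'M[C]_(p, q1)) (B : 'M[C]_(p, q2)) :
  ctr (row_mx A B) = col_mx (ctr A) (ctr B).
Proof. by rewrite /ctr map_row_mx tr_row_mx. Qed.

Lemma ctr_col p1 p2 q (A : 'M[C]_(p1, q)) (B : 'M[C]_(p2, q)) :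
  ctr (col_mx A B) = row_mx (ctr A) (ctr B).
Proof. by rewrite /ctr map_col_mx tr_col_mx. Qed.

Lemma ctr_block p1 p2 q1 q2 (A : 'M[C]_(p1, q1)) (B : 'M[C]_(p1, q2))
    (Cc : 'M[C]_(p2, q1)) (D : 'M[C]_(p2, q2)) :
  ctr (block_mx A B Cc D) = block_mx (ctr A) (ctr Cc) (ctr B) (ctr D).
Proof. by rewrite /ctr map_block_mx tr_block_mx. Qed.

End ConjugateTranspose.

Section QuadraticForms.
Variable R : realType.
Local Notation C := (complex R).

Definition qform p (H : 'M[C]_p) (v : 'cV[C]_p) : C := (ctr v *m H *m v) 0 0.

Definition sqnorm p (v : 'cV[C]_p) : C := (ctr v *m v) 0 0.

Lemma qformE p (H : 'M[C]_p) v :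
  qform H v = \sum_j \sum_i (v i 0)^* * H i j * v j 0.
Proof.
rewrite /qform !mxE; apply: eq_bigr => j _; rewrite !mxE mulr_suml.
by apply: eq_bigr => i _; rewrite !mxE.
Qed.

Lemma sqnormE p (v : 'cV[C]_p) : sqnorm v = \sum_i `|v i 0| ^+ 2.
Proof. by rewrite /sqnorm !mxE; apply: eq_bigr => i _; rewrite !mxE normCK mulrC. Qed.

Lemma sqnorm_ge0 p (v : 'cV[C]_p) : 0 <= sqnorm v.
Proof. by rewrite sqnormE sumr_ge0 // => i _; rewrite exprn_ge0. Qed.

Lemma sqnorm_gt0 p (v : 'cV[C]_p) : v != 0 -> 0 < sqnorm v.
Proof.
move=> v_neq0; rewrite lt_def sqnorm_ge0 andbT; apply: contraNneq v_neq0.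
rewrite sqnormE => /psumr_eq0P v0; apply/eqP/matrixP => i j.
rewrite ord1 mxE; apply/eqP; rewrite -normr_eq0 -sqrf_eq0.
by rewrite v0 // => k _; rewrite exprn_ge0.
Qed.

Lemma sqnorm_ge_entry p (v : 'cV[C]_p) i : `|v i 0| ^+ 2 <= sqnorm v.
Proof.
rewrite sqnormE (bigD1 i) //= lerDl.
by apply: sumr_ge0 => k _; rewrite exprn_ge0.
Qed.

Lemma sqnorm_ge_entryM p (v : 'cV[C]_p) i j : `|v i 0| * `|v j 0| <= sqnorm v.
Proof.
have /orP[le_ij|le_ji] := real_leVge (normr_real (v i 0)) (normr_real (v j 0)).
  by apply: le_trans (sqnorm_ge_entry v j); rewrite expr2 ler_wpM2r.
by apply: le_trans (sqnorm_ge_entry v i); rewrite expr2 ler_wpM2l.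
Qed.

Lemma qformD p (H K : 'M[C]_p) v : qform (H + K) v = qform H v + qform K v.
Proof. by rewrite /qform mulmxDr mulmxDl mxE. Qed.

Lemma qformZ p a (H : 'M[C]_p) v : qform (a *: H) v = a * qform H v.
Proof. by rewrite /qform -scalemxAr -scalemxAl mxE. Qed.

Lemma qform_scalar p a (v : 'cV[C]_p) : qform a%:M v = a * sqnorm v.
Proof. by rewrite /qform mul_mx_scalar -scalemxAl mxE. Qed.

Lemma qform_block_diag p q (X : 'M[C]_p) (Y : 'M[C]_q) x y :
  qform (block_mx X 0 0 Y) (col_mx x y) = qform X x + qform Y y.
Proof.
by rewrite /qform ctr_col mul_row_block !mulmx0 addr0 add0r mul_row_col mxE.
Qed.

Lemma qform_real p (H : 'M[C]_p) v : Defs.hermitian H -> qform H v \is Num.real.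
Proof.
move=> hH; apply/CrealP; rewrite /qform.
have -> : ((ctr v *m H *m v) 0 0)^* = (ctr (ctr v *m H *m v)) 0 0.
  by rewrite /ctr !mxE.
by rewrite !ctr_mul ctrK hH mulmxA.
Qed.

Lemma qform_bound p (H : 'M[C]_p) :
  exists2 K : R, 0 <= K & forall v, `|qform H v| <= K%:C%C * sqnorm v.
Proof.
pose K := \sum_j \sum_i `|H i j|.
have K_ge0 : 0 <= K by do 2![apply: sumr_ge0 => ? _].
exists (complex.Re K); first by rewrite -ler0c RRe_real ?ger0_real.
move=> v; rewrite RRe_real ?ger0_real // qformE mulr_suml.
apply: le_trans (ler_norm_sum _ _ _) _; apply: ler_sum => j _.
rewrite mulr_suml; apply: le_trans (ler_norm_sum _ _ _) _; apply: ler_sum => i _.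
rewrite !normrM norm_conjC mulrAC mulrC ler_wpM2l //.
exact: sqnorm_ge_entryM.
Qed.

End QuadraticForms.

Lemma fin_pos_lbound (R : realDomainType) (I : finType) (f : I -> R) :
  (forall i, 0 < f i) -> exists2 c : R, 0 < c & forall i, c <= f i.
Proof.
move=> f_gt0; exists (\big[Order.min/1]_i f i); last by move=> i; exact: bigmin_le.
by elim/big_ind: _ => //= x y x_gt0 y_gt0; rewrite lt_min x_gt0.
Qed.

Section PositiveDefinite.
Variable R : realType.
Local Notation C := (complex R).

Lemma pd_qform_ge0 p (X : 'M[C]_p) v : pd X -> 0 <= qform X v.
Proof.
move=> [_ pX]; have [->|v_neq0] := eqVneq v 0; last exact/ltW/pX.
by rewrite /qform mulmx0 mxE.
Qed.

Lemma pd_block_diag p q (X : 'M[C]_p) (Y : 'M[C]_q) :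
  pd X -> pd Y -> pd (block_mx X 0 0 Y).
Proof.
move=> pdX pdY; split.
  by rewrite /Defs.hermitian ctr_block !ctr0 pdX.1 pdY.1.
move=> v; rewrite -/(qform _ v) -[v]vsubmxK qform_block_diag.
set x := usubmx v; set y := dsubmx v.
have [-> v_neq0|x_neq0 _] := eqVneq x 0.
  rewrite ltr_wpDl ?pd_qform_ge0 //; apply: pdY.2.
  by apply: contraNneq v_neq0 => ->; rewrite col_mx0.
by rewrite ltr_wpDr ?pd_qform_ge0 //; exact: pdX.2.
Qed.

Lemma pd_scalar p (a : C) : 0 < a -> pd (a%:M : 'M[C]_p).
Proof.
move=> a_gt0; split; first by rewrite /Defs.hermitian ctr_scalar conj_Creal ?gtr0_real.
by move=> v v_neq0; rewrite -/(qform _ v) qform_scalar mulr_gt0 ?sqnorm_gt0.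
Qed.

Lemma hermitian_hermsymmx p (X : 'M[C]_p) : Defs.hermitian X -> X \is hermsymmx.
Proof. by move=> hX; rewrite qualifE /= expr0 scale1r -ctr_trC hX. Qed.

Lemma qform_diag_mx p (d : 'rV[C]_p) w :
  qform (diag_mx d) w = \sum_i d 0 i * `|w i 0| ^+ 2.
Proof.
rewrite /qform mul_mx_diag !mxE; apply: eq_bigr => i _.
by rewrite !mxE normCK mulrAC mulrC [_^* * _]mulrC.
Qed.

Lemma sqnorm_unitary p (U : 'M[C]_p) v :
  U \is unitarymx -> sqnorm (U *m v) = sqnorm v.
Proof.
move=> /unitarymxP UU; have UU' : ctr U *m U = 1%:M by apply: mulmx1C; rewrite ctr_trC.
by rewrite /sqnorm ctr_mul mulmxA -(mulmxA (ctr v)) UU' mulmx1.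
Qed.

Lemma pd_sqnorm_lbound p (X : 'M[C]_p) : pd X ->
  exists2 c : R, 0 < c & forall v, c%:C%C * sqnorm v <= qform X v.
Proof.
move=> [hX pX].
have /orthomx_spectralP eX := hermitian_normalmx (hermitian_hermsymmx hX).
set U := spectralmx X in eX; set d := spectral_diag X in eX.
have U_unitary : U \is unitarymx := spectral_unitarymx X.
have qformX v : qform X v = qform (diag_mx d) (U *m v).
  by rewrite /qform {1}eX invmx_unitary // -ctr_trC ctr_mul !mulmxA.
have d_gt0 i : 0 < d 0 i.
  pose v : 'cV[C]_p := ctr U *m delta_mx i 0.
  have Uv : U *m v = delta_mx i 0.
    by rewrite /v mulmxA ctr_trC (unitarymxP U_unitary) mul1mx.
  have v_neq0 : v != 0.
    apply: contra_neq (@oner_neq0 C) => v0.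
    by move: Uv; rewrite v0 mulmx0 => /matrixP/(_ i 0); rewrite !mxE !eqxx.
  have := pX v v_neq0; rewrite -/(qform X v) qformX Uv qform_diag_mx (bigD1 i) //= big1.
    by rewrite !mxE !eqxx normr1 expr1n mulr1 addr0.
  by move=> k ki; rewrite !mxE (negbTE ki) normr0 expr0n mulr0.
have d_real i : (complex.Re (d 0 i))%:C%C = d 0 i by rewrite RRe_real ?gtr0_real.
have [c c_gt0 le_c_d] : exists2 c : R, 0 < c & forall i, c <= complex.Re (d 0 i).
  by apply: fin_pos_lbound => i; rewrite -ltcR d_real.
exists c => // v; rewrite qformX -(sqnorm_unitary v U_unitary).
rewrite qform_diag_mx sqnormE mulr_sumr; apply: ler_sum => i _.
by rewrite ler_wpM2r ?exprn_ge0 // -d_real lecR.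
Qed.

End PositiveDefinite.

Section Passivity.
Variable R : realType.
Local Notation C := (complex R).

Lemma Wt_hermitian n m (X : 'M[C]_n) (N : model R n m) :
  Defs.hermitian X -> Defs.hermitian (Wt X N).
Proof.
move=> hX; rewrite /Defs.hermitian /Wt ctr_block ctr_row ctr_col ctr_block.
by rewrite !ctr_mul !ctrK hX ctrD addrC ctrK.
Qed.

Lemma Wt_blockE n m (X : 'M[C]_n) (N : model R n m) :
  let F := row_mx (mA N) (mB N) in
  Wt X N = block_mx X (X *m F) (ctr F *m X)
                    (block_mx X (ctr (mC N)) (mC N) (ctr (mD N) + mD N)).
Proof. by rewrite /Wt mul_mx_row ctr_row mul_col_mx. Qed.

Lemma W_blockE n m (X : 'M[C]_n) (N : model R n m) :
  let F := row_mx (mA N) (mB N) in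
  W X N = block_mx X (ctr (mC N)) (mC N) (ctr (mD N) + mD N) - ctr F *m X *m F.
Proof.
rewrite /W ctr_row mul_col_mx mul_col_row -!mulmxA.
by rewrite opp_block_mx add_block_mx.
Qed.

Lemma W_hermitian n m (X : 'M[C]_n) (N : model R n m) :
  Defs.hermitian X -> Defs.hermitian (W X N).
Proof.
move=> hX; rewrite /Defs.hermitian W_blockE ctrB ctr_block !ctr_mul !ctrK hX.
by rewrite ctrD ctrK [mD N + _]addrC mulmxA.
Qed.

(* [W X N] is [Wt X N] compressed to the vectors [(-F v, v)], so [Wt X N >= 0]
   forces [W X N >= 0]. *)
Lemma qform_W n m (X : 'M[C]_n) (N : model R n m) v :
  let F := row_mx (mA N) (mB N) in
  qform (W X N) v = qform (Wt X N) (col_mx (- (F *m v)) v).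
Proof.
move=> F; rewrite /qform W_blockE Wt_blockE -/F ctr_col ctrN ctr_mul.
rewrite mul_row_block mul_row_col !mulNmx !mulmxA addNr mul0mx add0r.
by rewrite mulmxBr !mulmxA addrC.
Qed.

Lemma psd_Wt_passive n m (X : 'M[C]_n) (N : model R n m) :
  pd X -> psd (Wt X N) -> passive N.
Proof.
move=> pdX [_ psdWt]; exists X; split => //; split; first exact: W_hermitian pdX.1.
by move=> v; rewrite -/(qform _ v) qform_W; apply: psdWt.
Qed.

Definition Wt_slope n m (X : 'M[C]_n) : 'M[C]_(n + (n + m)) :=
  block_mx X 0 0 (block_mx X 0 0 2%:M).

Lemma scale_Wt_shift n m (X : 'M[C]_n) (M : model R n m) (xi : R) :
  -1 < xi -> (1 + xi%:C%C) *: Wt X (shift M xi) = Wt X M + xi%:C%C *: Wt_slope m X.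
Proof.
move=> xi_gt_N1; set t := 1 + xi%:C%C.
have t_neq0 : t != 0.
  by rewrite /t -[1]/(1%:C%C) -rmorphD lt0r_neq0 // ltcR -ltrBlDl sub0r.
have conj_xi : (xi%:C%C)^* = xi%:C%C by apply/CrealP/complex_realP; exists xi.
have conj_tV : t^-1^* = t^-1.
  by rewrite fmorphV /t rmorphD rmorph1; congr (1 + _)^-1; exact: conj_xi.
rewrite /Wt /shift /Wt_slope /= -/t !ctrZ conj_tV !ctrD ctr_scalar conj_xi.
rewrite !scale_block_mx !scale_row_mx !scale_col_mx -!scalemxAl -!scalemxAr.
rewrite scalerDr !scalerA mulfV // !scale1r !scaler0 !add_block_mx !addr0.
by rewrite /t scalerDl scale1r addrACA scale_scalar_mx mulr_natr mulr2n raddfD.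
Qed.

Lemma psd_Wt_shift n m (X : 'M[C]_n) (M : model R n m) (c K xi : R) :
  Defs.hermitian X -> 0 <= xi -> K <= xi * c ->
  (forall v, c%:C%C * sqnorm v <= qform (Wt_slope m X) v) ->
  (forall v, `|qform (Wt X M) v| <= K%:C%C * sqnorm v) ->
  psd (Wt X (shift M xi)).
Proof.
move=> hX xi_ge0 le_K_xic slope_lb Wt_ub; split; first exact: Wt_hermitian.
move=> v; rewrite -/(qform _ v).
have t_gt0 : 0 < 1 + xi%:C%C by rewrite ltr_pwDl // ler0c.
rewrite -(pmulr_rge0 _ t_gt0) -qformZ scale_Wt_shift; last first.
  by apply: lt_le_trans xi_ge0; rewrite ltrN10.
rewrite qformD qformZ.
have Wt_lb := real_lerNnormlW (qform_real v (Wt_hermitian M hX)) (Wt_ub v).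
have slope_ub : K%:C%C * sqnorm v <= xi%:C%C * qform (Wt_slope m X) v.
  apply: le_trans (ler_wpM2l _ (slope_lb v)); last by rewrite ler0c.
  by rewrite mulrA -rmorphM ler_wpM2r ?sqnorm_ge0 // lecR.
by rewrite -(addNr (K%:C%C * sqnorm v)) lerD.
Qed.

End Passivity.

Unset Implicit Arguments.

Theorem lemma8p1 (R : realType) (n m : nat) (M : model R n m) :
  minimal M -> ~ passive M ->
  forall X : 'M[complex R]_n, pd X ->
  exists xs : R, 0 < xs /\ psd (Wt X (shift M xs)) /\
    forall xi : R, xs < xi -> passive (shift M xi) /\ psd (Wt X (shift M xi)).
Proof.
move=> _ _ X pdX.
have pd_slope : pd (Wt_slope m X).
  by apply/pd_block_diag/pd_block_diag/pd_scalar => //; rewrite ltr0n.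
have [c c_gt0 slope_lb] := pd_sqnorm_lbound pd_slope.
have [K K_ge0 Wt_ub] := qform_bound (Wt X M).
pose xs := K / c + 1.
have xs_gt0 : 0 < xs by rewrite ltr_wpDl // divr_ge0 // ltW.
have psd_shift xi : xs <= xi -> psd (Wt X (shift M xi)).
  move=> le_xs_xi; apply: psd_Wt_shift pdX.1 _ _ slope_lb Wt_ub.
    exact: le_trans (ltW xs_gt0) le_xs_xi.
  by rewrite -ler_pdivrMr //; apply: le_trans le_xs_xi; rewrite lerDl.
exists xs; split => //; split; first exact: psd_shift.
move=> xi /ltW le_xs_xi; split; last exact: psd_shift.
exact: psd_Wt_passive pdX (psd_shift xi le_xs_xi).
Qed.
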